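(* Assume $\sum_{j=1}^\infty\beta_j^2<\infty$ and $|\rho|<1$. Then the limits $\kappa_i=\lim_{p\to\infty}\kappa_{i,p}$ satisfy (i) $\kappa_1=\beta(1)+2b_1(\rho)$; (ii) $\kappa_2=\beta(1)\frac{1+\rho^2}{1-\rho^2}-\beta(\rho^2)\frac{1}{1-\rho^2}+2\Big(b_1^{(1)}(\rho)+b_1(\rho)\frac{1+\rho^2}{1-\rho^2}-b_2(\rho)\frac{1}{1-\rho^2}\Big)$; (iii) $\kappa_3=\frac{1}{(1-\rho^2)^2}\big((1+4\rho^2+\rho^4)(\beta(1)+2b_1(\rho))-(1+3\rho^2)(\beta(\rho^2)+2b_2(\rho))\big)+\frac{1}{1-\rho^2}\big(3b_1^{(1)}(\rho)(1+\rho^2)-2(b_2^{(1)}(\rho)+\beta^{(1)}(\rho^2))\big)+b^{(2)}(\rho)$.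
   Context: $\kappa_{1,p}=\sum_{k,l=1}^p\beta_k\beta_l\rho^{|k-l|}$, $\kappa_{2,p}=\sum_{k=1}^p\big(\sum_{l=1}^p\beta_l\rho^{|k-l|}\big)^2$, $\kappa_{3,p}=\sum_{k,l,j,j'=1}^p\beta_j\beta_{j'}\rho^{|k-j|}\rho^{|l-j'|}\rho^{|k-l|}$. For $|x|\le1$: $\beta(x)=\sum_{j\ge1}\beta_j^2x^j$, $\beta^{(1)}(x)=\sum_{j\ge1}j\beta_j^2x^j$, $b_1(x)=\sum_{j'\ge2}\sum_{j=1}^{j'-1}\beta_j\beta_{j'}x^{j'-j}$, $b_2(x)=\sum_{j'\ge2}\sum_{j=1}^{j'-1}\beta_j\beta_{j'}x^{j'+j}$, $b_1^{(1)}(x)=\sum_{j'\ge2}\sum_{j=1}^{j'-1}\beta_j\beta_{j'}x^{j'-j}(j'-j)$, $b_2^{(1)}(x)=\sum_{j'\ge2}\sum_{j=1}^{j'-1}\beta_j\beta_{j'}x^{j'+j}(j'+j)$, $b^{(2)}(x)=\sum_{j'\ge2}\sum_{j=1}^{j'-1}\beta_j\beta_{j'}x^{j'-j}(j'-j)^2$. *)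

From Stdlib Require Import Reals Lra Lia.
From Coquelicot Require Import Coquelicot.
Open Scope R_scope.

(* Coefficient sequence: beta j is meaningful for j >= 1; beta 0 is never used. *)

Definition absdiff (k l : nat) : nat := if Nat.leb k l then (l - k)%nat else (k - l)%nat.

Definition sum1 (f : nat -> R) (p : nat) : R := sum_n_m f 1 p.

Definition kappa1 (beta : nat -> R) (rho : R) (p : nat) : R :=
  sum1 (fun k => sum1 (fun l => beta k * beta l * rho ^ absdiff k l) p) p.

Definition kappa2 (beta : nat -> R) (rho : R) (p : nat) : R :=
  sum1 (fun k => (sum1 (fun l => beta l * rho ^ absdiff k l) p) ^ 2) p.

Definition kappa3 (beta : nat -> R) (rho : R) (p : nat) : R :=
  sum1 (fun k => sum1 (fun l => sum1 (fun j => sum1 (fun j' =>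
    beta j * beta j' * rho ^ absdiff k j * rho ^ absdiff l j' * rho ^ absdiff k l) p) p) p) p.

Definition betaf (beta : nat -> R) (x : R) : R :=
  Series (fun n => let j := S n in beta j ^ 2 * x ^ j).

Definition betaf1 (beta : nat -> R) (x : R) : R :=
  Series (fun n => let j := S n in INR j * beta j ^ 2 * x ^ j).

Definition bsum (beta : nat -> R) (g : nat -> nat -> R) : R :=
  Series (fun n => let j' := (n + 2)%nat in
    sum_n_m (fun j => beta j * beta j' * g j j') 1 (j' - 1)).

Definition b1 (beta : nat -> R) (x : R) : R :=
  bsum beta (fun j j' => x ^ (j' - j)).
Definition b2 (beta : nat -> R) (x : R) : R :=
  bsum beta (fun j j' => x ^ (j' + j)).
Definition b1d (beta : nat -> R) (x : R) : R :=
  bsum beta (fun j j' => x ^ (j' - j) * INR (j' - j)).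
Definition b2d (beta : nat -> R) (x : R) : R :=
  bsum beta (fun j j' => x ^ (j' + j) * INR (j' + j)).
Definition b2nd (beta : nat -> R) (x : R) : R :=
  bsum beta (fun j j' => x ^ (j' - j) * INR (j' - j) ^ 2).

From Stdlib Require Import Reals Lra Lia Arith.
From Coquelicot Require Import Coquelicot.
Open Scope R_scope.

(* With K_p = (rho^|j-k|), 1 <= j, k <= p, we have kappa_{i,p} = beta' K_p^i beta.  K_p has an
   explicit tridiagonal inverse, so closed forms for the entries of K_p^2 and K_p^3 can be
   checked instead of derived.  Each entry splits into a kernel independent of p and a corner
   term bounded by C t^(p-j) t^(p-j') with t < 1.  The quadratic form of the kernel is a diagonal
   sum plus twice an upper-triangular sum, converging to the series beta(.) and b(.) because the
   kernel decays geometrically in j' - j (its polynomial weights are absorbed by a slower rate).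
   By AM-GM the quadratic form of the corner term is dominated by the convolution of beta_j^2
   with a geometric sequence, which tends to 0 since sum beta_j^2 converges. *)

Lemma sum1_O f : sum1 f 0 = 0.
Proof. unfold sum1. rewrite sum_n_m_zero; auto. Qed.

Lemma sum1_S f p : sum1 f (S p) = sum1 f p + f (S p).
Proof. unfold sum1. rewrite sum_n_Sm; [reflexivity|lia]. Qed.

Lemma sum1_ext_loc f g p :
  (forall j, (1 <= j <= p)%nat -> f j = g j) -> sum1 f p = sum1 g p.
Proof.
  induction p as [|p IH]; intros H; [now rewrite !sum1_O|].
  rewrite !sum1_S, IH, H; [reflexivity|lia|]. intros; apply H; lia.
Qed.

Lemma sum1_ext f g p : (forall j, f j = g j) -> sum1 f p = sum1 g p.
Proof. intros; apply sum1_ext_loc; auto. Qed.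

Lemma sum1_plus f g p : sum1 (fun j => f j + g j) p = sum1 f p + sum1 g p.
Proof. induction p; [rewrite !sum1_O|rewrite !sum1_S, IHp]; ring. Qed.

Lemma sum1_minus f g p : sum1 (fun j => f j - g j) p = sum1 f p - sum1 g p.
Proof. induction p; [rewrite !sum1_O|rewrite !sum1_S, IHp]; ring. Qed.

Lemma sum1_mult_l c f p : sum1 (fun j => c * f j) p = c * sum1 f p.
Proof. induction p; [rewrite !sum1_O|rewrite !sum1_S, IHp]; ring. Qed.

Lemma sum1_mult_r c f p : sum1 (fun j => f j * c) p = sum1 f p * c.
Proof. induction p; [rewrite !sum1_O|rewrite !sum1_S, IHp]; ring. Qed.

Lemma sum1_zero p : sum1 (fun _ => 0) p = 0.
Proof. induction p; [apply sum1_O|rewrite sum1_S, IHp; ring]. Qed.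

Lemma sum1_swap (f : nat -> nat -> R) p q :
  sum1 (fun i => sum1 (fun j => f i j) q) p = sum1 (fun j => sum1 (fun i => f i j) p) q.
Proof.
  induction p as [|p IH]; [rewrite sum1_O, sum1_zero; reflexivity|].
  rewrite sum1_S, IH, <- sum1_plus. apply sum1_ext; intros; rewrite sum1_S; ring.
Qed.

Lemma sum1_prod f g p q :
  sum1 f p * sum1 g q = sum1 (fun i => sum1 (fun j => f i * g j) q) p.
Proof. rewrite <- sum1_mult_r. apply sum1_ext; intros. rewrite sum1_mult_l; ring. Qed.

Lemma sum1_le f g p :
  (forall j, (1 <= j <= p)%nat -> f j <= g j) -> sum1 f p <= sum1 g p.
Proof.
  induction p as [|p IH]; intros H; [rewrite !sum1_O; lra|].
  rewrite !sum1_S. apply Rplus_le_compat; [apply IH; intros; apply H|apply H]; lia.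
Qed.

Lemma sum1_abs f p : Rabs (sum1 f p) <= sum1 (fun j => Rabs (f j)) p.
Proof.
  induction p; [rewrite !sum1_O, Rabs_R0; lra|].
  rewrite !sum1_S. eapply Rle_trans; [apply Rabs_triang|lra].
Qed.

Lemma sum1_nonneg f p : (forall j, (1 <= j <= p)%nat -> 0 <= f j) -> 0 <= sum1 f p.
Proof. intros H. rewrite <- (sum1_zero p). now apply sum1_le. Qed.

Lemma sum1_indicator v j p :
  (1 <= j <= p)%nat -> sum1 (fun m => if Nat.eqb m j then v else 0) p = v.
Proof.
  induction p as [|p IH]; intros H; [lia|]. rewrite sum1_S.
  destruct (Nat.eq_dec j (S p)) as [->|Hne].
  - rewrite Nat.eqb_refl, (sum1_ext_loc _ (fun _ => 0)), sum1_zero; [ring|].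
    intros m Hm. destruct (Nat.eqb_spec m (S p)); [lia|auto].
  - rewrite IH by lia. destruct (Nat.eqb_spec (S p) j); [lia|ring].
Qed.

Lemma sum1_shift_pred f q :
  sum1 (fun k => if Nat.ltb 1 k then f (k - 1)%nat else 0) (S q) = sum1 f q.
Proof.
  induction q as [|q IH]; [rewrite sum1_S, !sum1_O; simpl; ring|].
  rewrite sum1_S, IH, sum1_S. destruct (Nat.ltb_spec 1 (S (S q))); [|lia].
  now replace (S (S q) - 1)%nat with (S q) by lia.
Qed.

Lemma sum1_drop_last g q :
  sum1 (fun k => if Nat.ltb k (S q) then g k else 0) (S q) = sum1 g q.
Proof.
  rewrite sum1_S. destruct (Nat.ltb_spec (S q) (S q)); [lia|].
  rewrite Rplus_0_r. apply sum1_ext_loc. intros j Hj.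
  destruct (Nat.ltb_spec j (S q)); [auto|lia].
Qed.

Lemma sum1_sum_n f p : sum1 f (S p) = sum_n (fun n => f (S n)) p.
Proof. unfold sum1, sum_n. now rewrite sum_n_m_S. Qed.

Lemma absdiff_sym a b : absdiff a b = absdiff b a.
Proof. unfold absdiff. destruct (Nat.leb_spec a b), (Nat.leb_spec b a); lia. Qed.

Lemma absdiff_lt j j' : (j < j')%nat -> absdiff j j' = (j' - j)%nat.
Proof. intros; unfold absdiff; destruct (Nat.leb_spec j j'); lia. Qed.

Lemma absdiff_diag j : absdiff j j = 0%nat.
Proof. unfold absdiff; rewrite Nat.leb_refl; lia. Qed.

Ltac absdiff_lia :=
  unfold absdiff; match goal with |- context [Nat.leb ?a ?b] => destruct (Nat.leb_spec a b) end; lia.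

Definition kms (rho : R) (j k : nat) : R := rho ^ absdiff j k.
Definition kms2 (rho : R) (p j j' : nat) : R := sum1 (fun k => kms rho j k * kms rho k j') p.
Definition kms3 (rho : R) (p j j' : nat) : R := sum1 (fun k => kms rho j k * kms2 rho p k j') p.

Definition qform (b : nat -> R) (K : nat -> nat -> R) (p : nat) : R :=
  sum1 (fun j => sum1 (fun j' => b j * b j' * K j j') p) p.

Lemma kms_sym rho a b : kms rho a b = kms rho b a.
Proof. unfold kms; now rewrite absdiff_sym. Qed.

Lemma kappa1_qform beta rho p : kappa1 beta rho p = qform beta (kms rho) p.
Proof. reflexivity. Qed.

Lemma kappa2_qform beta rho p : kappa2 beta rho p = qform beta (kms2 rho p) p.
Proof.
  unfold kappa2, qform.
  rewrite (sum1_ext _ (fun k => sum1 (fun l => sum1 (fun l' =>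
    beta l * beta l' * (kms rho l k * kms rho k l')) p) p)).
  - rewrite sum1_swap. apply sum1_ext; intros l.
    rewrite sum1_swap. apply sum1_ext; intros l'.
    unfold kms2. now rewrite <- sum1_mult_l.
  - intros k. rewrite <- Rsqr_pow2; unfold Rsqr; rewrite sum1_prod. apply sum1_ext; intros l. apply sum1_ext; intros l'.
    rewrite (kms_sym rho l k). unfold kms. ring.
Qed.

Lemma kappa3_qform beta rho p : kappa3 beta rho p = qform beta (kms3 rho p) p.
Proof.
  unfold kappa3, qform.
  rewrite (sum1_ext _ (fun k => sum1 (fun j => sum1 (fun j' => sum1 (fun l =>
    beta j * beta j' * rho ^ absdiff k j * rho ^ absdiff l j' * rho ^ absdiff k l) p) p) p)).
  - rewrite sum1_swap. apply sum1_ext; intros j.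
    rewrite sum1_swap. apply sum1_ext; intros j'.
    unfold kms3, kms2. rewrite <- sum1_mult_l. apply sum1_ext; intros k.
    rewrite <- !sum1_mult_l. apply sum1_ext; intros l.
    rewrite (absdiff_sym k j). unfold kms. ring.
  - intros k. rewrite sum1_swap. apply sum1_ext; intros j. apply sum1_swap.
Qed.

Definition kms_inv (rho : R) (p : nat) (x : nat -> R) (k : nat) : R :=
  ((1 + rho^2 - (if Nat.eqb k 1 then rho^2 else 0) - (if Nat.eqb k p then rho^2 else 0)) * x k
   - (if Nat.ltb 1 k then rho * x (k - 1)%nat else 0)
   - (if Nat.ltb k p then rho * x (S k) else 0)) / (1 - rho^2).

Lemma kms_mul_inv_entry rho p j m : (1 <= j <= p)%nat -> (1 <= m <= p)%nat ->
  kms rho j m * (1 + rho^2 - (if Nat.eqb m 1 then rho^2 else 0) - (if Nat.eqb m p then rho^2 else 0))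
  - (if Nat.ltb m p then kms rho j (S m) * rho else 0)
  - (if Nat.ltb 1 m then kms rho j (m - 1)%nat * rho else 0)
  = if Nat.eqb m j then 1 - rho^2 else 0.
Proof.
  intros Hj Hm. unfold kms.
  destruct (lt_eq_lt_dec m j) as [[Hlt|Heq]|Hgt].
  - destruct (Nat.eqb_spec m j); [lia|].
    destruct (Nat.ltb_spec m p); [|lia]. destruct (Nat.eqb_spec m p); [lia|].
    replace (absdiff j (S m)) with (j - S m)%nat by absdiff_lia.
    replace (absdiff j m) with (S (j - S m)) by absdiff_lia.
    destruct (Nat.eqb_spec m 1); destruct (Nat.ltb_spec 1 m); try lia.
    + simpl. ring.
    + replace (absdiff j (m - 1)) with (S (S (j - S m))) by absdiff_lia. simpl. ring.
  - subst m. rewrite Nat.eqb_refl, absdiff_diag.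
    replace (absdiff j (j - 1)) with 1%nat by absdiff_lia.
    replace (absdiff j (S j)) with 1%nat by absdiff_lia.
    destruct (Nat.eqb_spec j 1); destruct (Nat.ltb_spec 1 j); destruct (Nat.eqb_spec j p);
    destruct (Nat.ltb_spec j p); try lia; simpl; ring.
  - destruct (Nat.eqb_spec m j); [lia|]. destruct (Nat.eqb_spec m 1); [lia|].
    destruct (Nat.ltb_spec 1 m); [|lia].
    replace (absdiff j (m - 1)) with (m - 1 - j)%nat by absdiff_lia.
    replace (absdiff j m) with (S (m - 1 - j)) by absdiff_lia.
    destruct (Nat.eqb_spec m p); destruct (Nat.ltb_spec m p); try lia.
    + simpl; ring.
    + replace (absdiff j (S m)) with (S (S (m - 1 - j))) by absdiff_lia. simpl; ring.
Qed.

Lemma kms_mul_inv rho p x j : rho^2 <> 1 -> (1 <= j <= p)%nat ->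
  sum1 (fun k => kms rho j k * kms_inv rho p x k) p = x j.
Proof.
  intros Hr Hj. destruct p as [|q]; [lia|].
  assert (Hd : 1 - rho^2 <> 0) by lra.
  apply (Rmult_eq_reg_r (1 - rho^2)); [|auto].
  rewrite <- sum1_mult_r. unfold kms_inv.
  rewrite (sum1_ext _ (fun k =>
    kms rho j k * ((1 + rho^2 - (if Nat.eqb k 1 then rho^2 else 0)
                    - (if Nat.eqb k (S q) then rho^2 else 0)) * x k)
    - (if Nat.ltb 1 k then (fun m => kms rho j (S m) * rho * x m) (k - 1)%nat else 0)
    - (if Nat.ltb k (S q) then kms rho j k * rho * x (S k) else 0))).
  2:{ intros k. field_simplify; [|auto].
      destruct (Nat.ltb_spec 1 k); destruct (Nat.ltb_spec k (S q));
      try (replace (S (k - 1)) with k by lia); field; auto. }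
  (* reindex both off-diagonal sums so that every term carries [x m] *)
  rewrite !sum1_minus, (sum1_shift_pred (fun m => kms rho j (S m) * rho * x m) q), sum1_drop_last.
  rewrite <- (sum1_drop_last (fun m => kms rho j (S m) * rho * x m)).
  rewrite <- (sum1_shift_pred (fun k => kms rho j k * rho * x (S k))).
  rewrite <- !sum1_minus.
  rewrite (sum1_ext_loc _ (fun m => if Nat.eqb m j then x j * (1 - rho^2) else 0)).
  - now rewrite sum1_indicator.
  - intros m Hm.
    replace (if Nat.eqb m j then x j * (1 - rho^2) else 0)
      with (x m * (if Nat.eqb m j then 1 - rho^2 else 0))
      by (destruct (Nat.eqb_spec m j); [subst; ring|ring]).
    rewrite <- (kms_mul_inv_entry rho (S q) j m) by lia.
    destruct (Nat.ltb_spec 1 m); destruct (Nat.ltb_spec m (S q));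
      try (replace (S (m - 1)) with m by lia); ring.
Qed.

Definition cA (rho : R) : R := (1 + rho^2) / (1 - rho^2).
Definition cB (rho : R) : R := (1 + 4 * rho^2 + rho^4) / (1 - rho^2)^2.
Definition cC (rho : R) : R := (1 + 3 * rho^2) / (1 - rho^2)^2.

Definition kms2_lim (rho : R) (j j' : nat) : R :=
  rho ^ absdiff j j' * (cA rho + INR (absdiff j j')) - rho ^ j * rho ^ j' / (1 - rho ^ 2).
Definition kms2_edge (rho : R) (p j j' : nat) : R :=
  rho ^ (p - j) * rho ^ (p - j') * (- rho ^ 2 / (1 - rho ^ 2)).

Definition kms3_lim (rho : R) (j j' : nat) : R :=
  rho ^ absdiff j j' * (cB rho + 3/2 * cA rho * INR (absdiff j j') + INR (absdiff j j') ^ 2 / 2)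
  - rho ^ j * rho ^ j' * (cC rho + (INR j + INR j') / (1 - rho^2)).
Definition kms3_edge (rho : R) (p j j' : nat) : R :=
  - rho ^ (p - j) * rho ^ (p - j') * rho ^ 2
    * (cC rho + (INR (p - j) + INR (p - j') + 2) / (1 - rho^2))
  + rho ^ (p - j) * rho ^ (p - j') * rho ^ 2
    * (rho ^ j * rho ^ j + rho ^ j' * rho ^ j') / (1 - rho^2)^2.

Ltac kms_field :=
  unfold cA, cB, cC;
  do 3 (repeat (rewrite plus_INR || rewrite S_INR || rewrite INR_0 || rewrite pow_add); cbn [pow]);
  field; repeat split; auto.

(* Case analysis on the position of k relative to j', 1 and p, after which every exponent
   is an explicit sum of fresh variables and the identity is a field identity. *)
Ltac kms_inv_closed_form :=
  match goal with
  | Hk : (1 <= ?k <= ?p)%nat, Hj : (1 <= ?j' <= ?p)%nat |- _ =>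
  destruct (lt_eq_lt_dec k j') as [[Hlt|Heq]|Hgt];
  [ destruct (Nat.eqb_spec k p); [lia|]; destruct (Nat.ltb_spec k p); [|lia];
    destruct (Nat.le_exists_sub (S k) j' Hlt) as [e [He _]];
    destruct (Nat.le_exists_sub j' p (proj2 Hj)) as [f [Hf _]];
    replace (absdiff k j') with (S e) by absdiff_lia;
    replace (absdiff (S k) j') with e by absdiff_lia;
    replace (p - k)%nat with (S e + f)%nat by lia;
    replace (p - S k)%nat with (e + f)%nat by lia;
    replace (p - j')%nat with f by lia;
    replace j' with (k + S e)%nat by lia;
    destruct (Nat.eqb_spec k 1); destruct (Nat.ltb_spec 1 k); try lia;
    [ subst k; kms_field
    | destruct k as [|k0]; [lia|];
      replace (absdiff (S k0 - 1) (S k0 + S e)) with (S (S e)) by absdiff_lia;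
      replace (p - (S k0 - 1))%nat with (S (S e + f)) by lia;
      replace (S k0 - 1)%nat with k0 by lia; kms_field ]
  | subst j';
    destruct (Nat.le_exists_sub k p (proj2 Hk)) as [f [Hf _]];
    rewrite absdiff_diag;
    replace (absdiff (S k) k) with 1%nat by absdiff_lia;
    replace (p - k)%nat with f by lia;
    destruct (Nat.eqb_spec k 1); destruct (Nat.ltb_spec 1 k); try lia;
    destruct (Nat.eqb_spec k p); destruct (Nat.ltb_spec k p); try lia;
    [ subst k; replace f with 0%nat by lia; kms_field
    | subst k; destruct f as [|f0]; [lia|]; replace (p - 2)%nat with f0 by lia; kms_field
    | destruct k as [|k0]; [lia|];
      replace (absdiff (S k0 - 1) (S k0)) with 1%nat by absdiff_lia;
      replace (p - (S k0 - 1))%nat with (S f) by lia;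
      replace (S k0 - 1)%nat with k0 by lia; replace f with 0%nat by lia; kms_field
    | destruct k as [|k0]; [lia|];
      replace (absdiff (S k0 - 1) (S k0)) with 1%nat by absdiff_lia;
      replace (p - (S k0 - 1))%nat with (S f) by lia;
      destruct f as [|f0]; [lia|]; replace (p - S (S k0))%nat with f0 by lia;
      replace (S k0 - 1)%nat with k0 by lia; kms_field ]
  | destruct (Nat.eqb_spec k 1); [lia|]; destruct (Nat.ltb_spec 1 k); [|lia];
    destruct (Nat.le_exists_sub (S j') k Hgt) as [e [He _]];
    destruct (Nat.le_exists_sub k p (proj2 Hk)) as [f [Hf _]];
    replace (absdiff k j') with (S e) by absdiff_lia;
    replace (absdiff (S k) j') with (S (S e)) by absdiff_lia;
    replace (absdiff (k - 1) j') with e by absdiff_lia;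
    replace (p - k)%nat with f by lia;
    replace (p - (k - 1))%nat with (S f) by lia;
    replace (p - j')%nat with (S e + f)%nat by lia;
    replace (k - 1)%nat with (j' + e)%nat by lia;
    replace k with (j' + S e)%nat by lia;
    destruct (Nat.eqb_spec (j' + S e) p); destruct (Nat.ltb_spec (j' + S e) p); try lia;
    [ replace f with 0%nat by lia; kms_field
    | destruct f as [|f0]; [lia|]; replace (p - S (j' + S e))%nat with f0 by lia; kms_field ] ]
  end.

Lemma kms_inv_kms2 rho p k j' : rho^2 <> 1 -> (1 <= k <= p)%nat -> (1 <= j' <= p)%nat ->
  kms_inv rho p (fun i => kms2_lim rho i j' + kms2_edge rho p i j') k = kms rho k j'.
Proof.
  intros Hr Hk Hj. assert (Hd : 1 - rho * rho <> 0) by (simpl in Hr; lra).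
  assert (Hd' : 1 - rho * (rho * 1) <> 0) by lra.
  unfold kms_inv, kms2_lim, kms2_edge, kms. kms_inv_closed_form.
Qed.

Lemma kms_inv_kms3 rho p k j' : rho^2 <> 1 -> (1 <= k <= p)%nat -> (1 <= j' <= p)%nat ->
  kms_inv rho p (fun i => kms3_lim rho i j' + kms3_edge rho p i j') k
  = kms2_lim rho k j' + kms2_edge rho p k j'.
Proof.
  intros Hr Hk Hj. assert (Hd : 1 - rho * rho <> 0) by (simpl in Hr; lra).
  assert (Hd' : 1 - rho * (rho * 1) <> 0) by lra.
  unfold kms_inv, kms3_lim, kms3_edge, kms2_lim, kms2_edge. kms_inv_closed_form.
Qed.

Lemma kms2E rho p j j' : rho^2 <> 1 -> (1 <= j <= p)%nat -> (1 <= j' <= p)%nat ->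
  kms2 rho p j j' = kms2_lim rho j j' + kms2_edge rho p j j'.
Proof.
  intros Hr Hj Hj'. unfold kms2.
  rewrite (sum1_ext_loc _ (fun k => kms rho j k
             * kms_inv rho p (fun i => kms2_lim rho i j' + kms2_edge rho p i j') k)).
  - now apply kms_mul_inv.
  - intros k Hk. now rewrite kms_inv_kms2.
Qed.

Lemma kms3E rho p j j' : rho^2 <> 1 -> (1 <= j <= p)%nat -> (1 <= j' <= p)%nat ->
  kms3 rho p j j' = kms3_lim rho j j' + kms3_edge rho p j j'.
Proof.
  intros Hr Hj Hj'. unfold kms3.
  rewrite (sum1_ext_loc _ (fun k => kms rho j k
             * kms_inv rho p (fun i => kms3_lim rho i j' + kms3_edge rho p i j') k)).
  - now apply kms_mul_inv.
  - intros k Hk. now rewrite kms_inv_kms3, kms2E.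
Qed.

Definition diag_sum (b h : nat -> R) (p : nat) : R := sum1 (fun j => b j ^ 2 * h j) p.
Definition upper_sum (b : nat -> R) (g : nat -> nat -> R) (p : nat) : R :=
  sum1 (fun j' => sum1 (fun j => b j * b j' * g j j') (j' - 1)) p.

Lemma qform_ext_loc b K K' p :
  (forall j j', (1 <= j <= p)%nat -> (1 <= j' <= p)%nat -> K j j' = K' j j') ->
  qform b K p = qform b K' p.
Proof.
  intros H. unfold qform. apply sum1_ext_loc; intros j Hj.
  apply sum1_ext_loc; intros j' Hj'. now rewrite H.
Qed.

Lemma qform_plus b K E p : qform b (fun j j' => K j j' + E j j') p = qform b K p + qform b E p.
Proof.
  unfold qform. rewrite <- sum1_plus. apply sum1_ext; intros j.
  rewrite <- sum1_plus. apply sum1_ext; intros j'. ring.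
Qed.

Lemma qform_sym b K p : (forall j j', K j j' = K j' j) ->
  qform b K p = diag_sum b (fun j => K j j) p + 2 * upper_sum b K p.
Proof.
  intros HK. unfold qform, diag_sum, upper_sum. induction p as [|p IH]; [rewrite !sum1_O; ring|].
  rewrite !sum1_S. replace (S p - 1)%nat with p by lia.
  rewrite (sum1_ext (fun j => sum1 (fun j' => b j * b j' * K j j') (S p))
     (fun j => sum1 (fun j' => b j * b j' * K j j') p + b j * b (S p) * K j (S p)))
    by (intros; apply sum1_S).
  rewrite sum1_plus, IH.
  rewrite (sum1_ext (fun j' => b (S p) * b j' * K (S p) j') (fun j => b j * b (S p) * K j (S p)))
    by (intros; rewrite HK; ring).
  ring.
Qed.

Lemma diag_sum_plus b h1 h2 p :
  diag_sum b (fun j => h1 j + h2 j) p = diag_sum b h1 p + diag_sum b h2 p.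
Proof. unfold diag_sum. rewrite <- sum1_plus. apply sum1_ext; intros j. ring. Qed.

Lemma diag_sum_scal b c h p : diag_sum b (fun j => c * h j) p = c * diag_sum b h p.
Proof. unfold diag_sum. rewrite <- sum1_mult_l. apply sum1_ext; intros j. ring. Qed.

Lemma upper_sum_plus b g1 g2 p :
  upper_sum b (fun j j' => g1 j j' + g2 j j') p = upper_sum b g1 p + upper_sum b g2 p.
Proof.
  unfold upper_sum. rewrite <- sum1_plus. apply sum1_ext; intros j'.
  rewrite <- sum1_plus. apply sum1_ext; intros j. ring.
Qed.

Lemma upper_sum_scal b c g p : upper_sum b (fun j j' => c * g j j') p = c * upper_sum b g p.
Proof.
  unfold upper_sum. rewrite <- sum1_mult_l. apply sum1_ext; intros j'.
  rewrite <- sum1_mult_l. apply sum1_ext; intros j. ring.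
Qed.

Lemma upper_sum_ext_lt b g1 g2 p : (forall j j', (j < j')%nat -> g1 j j' = g2 j j') ->
  upper_sum b g1 p = upper_sum b g2 p.
Proof.
  intros H. unfold upper_sum. apply sum1_ext; intros j'.
  apply sum1_ext_loc; intros j Hj. rewrite H; [auto|lia].
Qed.

Lemma pow_le_1 x n : 0 <= x <= 1 -> x ^ n <= 1.
Proof. intros H. rewrite <- (pow1 n). apply pow_incr; lra. Qed.

Lemma pow_le_pow_le_1 x m n : 0 <= x <= 1 -> (m <= n)%nat -> x ^ n <= x ^ m.
Proof.
  intros H Hmn. replace n with (m + (n - m))%nat by lia. rewrite pow_add.
  assert (x ^ (n - m) <= 1) by (apply pow_le_1; auto).
  assert (0 <= x ^ m) by (apply pow_le; lra). nra.
Qed.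

Lemma Rabs_pow_le_1 rho n : Rabs rho < 1 -> Rabs (rho ^ n) <= 1.
Proof. intros H. rewrite <- RPow_abs. apply pow_le_1. split; [apply Rabs_pos|lra]. Qed.

Lemma pow2_lt_1 rho : Rabs rho < 1 -> rho ^ 2 < 1.
Proof.
  intros H. rewrite <- (Rabs_right (rho ^ 2)) by (apply Rle_ge, pow2_ge_0).
  rewrite <- RPow_abs. assert (0 <= Rabs rho) by apply Rabs_pos. nra.
Qed.

Lemma Rabs_mult3_le x y g X Y G :
  Rabs x <= X -> Rabs y <= Y -> Rabs g <= G -> Rabs (x * y * g) <= X * Y * G.
Proof.
  intros. rewrite !Rabs_mult.
  assert (0 <= Rabs x) by apply Rabs_pos. assert (0 <= Rabs y) by apply Rabs_pos.
  assert (0 <= Rabs g) by apply Rabs_pos.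
  apply Rmult_le_compat; try apply Rmult_le_pos; auto. now apply Rmult_le_compat.
Qed.

Lemma Rabs_mult_le_contract s x G : 0 <= s <= 1 -> Rabs x <= G -> Rabs (s * x) <= G.
Proof.
  intros Hs Hx. rewrite Rabs_mult, Rabs_right by lra.
  assert (0 <= Rabs x) by apply Rabs_pos. nra.
Qed.

(* Squared linear and quadratic weights are absorbed by weakening the rate from |rho|
   to its fourth root. *)
Definition root4 (rho : R) : R := sqrt (sqrt (Rabs rho)).
Definition root4_const (rho : R) : R := 1 / (1 - root4 rho) ^ 2.

Lemma sqrt_lt_1_nonneg x : 0 <= x < 1 -> 0 <= sqrt x < 1.
Proof. intros H. split; [apply sqrt_pos|]. rewrite <- sqrt_1. apply sqrt_lt_1; lra. Qed.

Lemma root4_spec rho : Rabs rho < 1 -> 0 <= root4 rho < 1 /\ root4 rho ^ 4 = Rabs rho.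
Proof.
  intros H. unfold root4. assert (H0 := Rabs_pos rho).
  assert (H1 := sqrt_lt_1_nonneg (Rabs rho) (conj H0 H)).
  split; [now apply sqrt_lt_1_nonneg|].
  replace 4%nat with (2 * 2)%nat by lia. rewrite pow_mult.
  rewrite pow2_sqrt by lra. rewrite pow2_sqrt; lra.
Qed.

Lemma root4_range rho : Rabs rho < 1 -> 0 <= root4 rho < 1.
Proof. intros H; apply root4_spec; auto. Qed.

Lemma root4_const_nonneg rho : Rabs rho < 1 -> 0 <= root4_const rho.
Proof.
  intros H. destruct (root4_range rho H). unfold root4_const.
  apply Rlt_le, Rdiv_lt_0_compat; [lra|]. apply pow_lt; lra.
Qed.

Lemma linear_pow_le t n : 0 <= t < 1 -> (1 + INR n) * t ^ n <= 1 / (1 - t).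
Proof.
  intros Ht.
  assert (Hgeo : (1 + INR n) * t ^ n * (1 - t) <= 1 - t ^ S n).
  { induction n as [|n IH]; [simpl; lra|].
    rewrite S_INR. assert (0 <= t ^ S n <= 1) by (split; [apply pow_le|apply pow_le_1]; lra).
    assert (0 <= INR n) by apply pos_INR.
    replace (t ^ S (S n)) with (t * t ^ S n) by (simpl; ring).
    replace ((1 + (INR n + 1)) * t ^ S n * (1 - t)) with
      (t * ((1 + INR n) * t ^ n * (1 - t)) + t ^ S n * (1 - t)) by (simpl; ring).
    nra. }
  assert (0 <= t ^ S n) by (apply pow_le; lra).
  apply (Rmult_le_reg_r (1 - t)); [lra|].
  replace (1 / (1 - t) * (1 - t)) with 1 by (field; lra). lra.
Qed.

Lemma quadratic_pow_le_root4 rho n : Rabs rho < 1 ->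
  Rabs rho ^ n * (1 + INR n) ^ 2 <= root4_const rho * root4 rho ^ n.
Proof.
  intros H. destruct (root4_spec rho H) as [Ht Ht4]. set (t := root4 rho) in *.
  rewrite <- Ht4, <- pow_mult. replace (4 * n)%nat with (n + n + n + n)%nat by lia.
  rewrite !pow_add. unfold root4_const; fold t.
  assert (Hb := linear_pow_le t n Ht).
  assert (0 <= t ^ n <= 1) by (split; [apply pow_le|apply pow_le_1]; lra).
  assert (0 <= (1 + INR n) * t ^ n) by (assert (0 <= INR n) by apply pos_INR; nra).
  assert (((1 + INR n) * t ^ n) ^ 2 <= (1 / (1 - t)) ^ 2) by (apply pow_incr; lra).
  replace (1 / (1 - t) ^ 2) with ((1 / (1 - t)) ^ 2) by (field; lra).
  replace (t ^ n * t ^ n * t ^ n * t ^ n * (1 + INR n) ^ 2) with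
    (((1 + INR n) * t ^ n) ^ 2 * (t ^ n * t ^ n)) by ring.
  assert (0 <= t ^ n * t ^ n <= t ^ n) by nra.
  assert (0 <= (1 / (1 - t)) ^ 2) by (apply pow_le; apply Rlt_le, Rdiv_lt_0_compat; lra).
  assert (0 <= ((1 + INR n) * t ^ n) ^ 2) by (apply pow_le; lra).
  nra.
Qed.

Lemma pow_le_root4 rho n : Rabs rho < 1 ->
  Rabs (rho ^ n) <= root4_const rho * root4 rho ^ n.
Proof.
  intros H. eapply Rle_trans; [|now apply quadratic_pow_le_root4]. rewrite <- RPow_abs.
  assert (0 <= Rabs rho ^ n) by (apply pow_le, Rabs_pos). assert (0 <= INR n) by apply pos_INR. nra.
Qed.

Lemma pow_INR_le_root4 rho n : Rabs rho < 1 ->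
  Rabs (rho ^ n * INR n) <= root4_const rho * root4 rho ^ n.
Proof.
  intros H. eapply Rle_trans; [|now apply quadratic_pow_le_root4]. rewrite Rabs_mult, <- RPow_abs.
  assert (0 <= Rabs rho ^ n) by (apply pow_le, Rabs_pos). assert (0 <= INR n) by apply pos_INR.
  rewrite (Rabs_right (INR n)) by lra. nra.
Qed.

Lemma pow_INR2_le_root4 rho n : Rabs rho < 1 ->
  Rabs (rho ^ n * INR n ^ 2) <= root4_const rho * root4 rho ^ n.
Proof.
  intros H. eapply Rle_trans; [|now apply quadratic_pow_le_root4]. rewrite Rabs_mult, <- RPow_abs.
  assert (0 <= Rabs rho ^ n) by (apply pow_le, Rabs_pos). assert (0 <= INR n) by apply pos_INR.
  rewrite (Rabs_right (INR n ^ 2)) by (apply Rle_ge, pow_le; lra). nra.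
Qed.

Definition geom_conv (b : nat -> R) (t : R) (p : nat) : R := sum1 (fun j => b j ^ 2 * t ^ (p - j)) p.
Definition geom_sum (t : R) (p : nat) : R := sum1 (fun j => t ^ (p - j)) p.

Lemma geom_sum_bound t p : 0 <= t < 1 -> 0 <= geom_sum t p <= 1 / (1 - t).
Proof.
  intros Ht. unfold geom_sum. induction p as [|p IH].
  - rewrite sum1_O. split; [lra|]. apply Rlt_le, Rdiv_lt_0_compat; lra.
  - rewrite sum1_S, Nat.sub_diag.
    rewrite (sum1_ext_loc _ (fun j => t * t ^ (p - j))).
    2:{ intros j Hj. now replace (S p - j)%nat with (S (p - j)) by lia. }
    rewrite sum1_mult_l. simpl pow.
    assert (1 / (1 - t) = t * (1 / (1 - t)) + 1) by (field; lra). nra.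
Qed.

Lemma geom_conv_nonneg b t p : 0 <= t -> 0 <= geom_conv b t p.
Proof.
  intros Ht. apply sum1_nonneg. intros j _.
  apply Rmult_le_pos; [apply pow2_ge_0|now apply pow_le].
Qed.

Lemma ex_series_geom_conv b t : ex_series (fun n => b (S n) ^ 2) -> 0 <= t < 1 ->
  ex_series (fun n => geom_conv b t (S n)).
Proof.
  intros Hb Ht.
  assert (Hm := is_series_mult_pos (fun n => b (S n) ^ 2) (fun n => t ^ n) _ _
    (Series_correct _ Hb) (is_series_geom t ltac:(rewrite Rabs_right; lra))
    (fun n => pow2_ge_0 _) (fun n => pow_le _ n (proj1 Ht))).
  eexists. eapply is_series_ext; [|exact Hm].
  intros n. simpl. unfold geom_conv. now rewrite sum1_sum_n, sum_n_Reals.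
Qed.

Lemma is_lim_geom_conv b t : ex_series (fun n => b (S n) ^ 2) -> 0 <= t < 1 ->
  is_lim_seq (geom_conv b t) 0.
Proof.
  intros Hb Ht. apply is_lim_seq_incr_1, ex_series_lim_0. now apply ex_series_geom_conv.
Qed.

Lemma Rabs_mult_le_amgm x y e C u v : 0 <= C -> 0 <= u -> 0 <= v -> Rabs e <= C * u * v ->
  Rabs (x * y * e) <= C / 2 * (x ^ 2 * u * v + u * (y ^ 2 * v)).
Proof.
  intros HC Hu Hv He. rewrite !Rabs_mult.
  assert (Hx : Rabs x * Rabs x = x ^ 2) by (rewrite <- Rabs_mult, Rabs_right; [ring|apply Rle_ge, Rle_0_sqr]).
  assert (Hy : Rabs y * Rabs y = y ^ 2) by (rewrite <- Rabs_mult, Rabs_right; [ring|apply Rle_ge, Rle_0_sqr]).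
  assert (0 <= Rabs x) by apply Rabs_pos. assert (0 <= Rabs y) by apply Rabs_pos.
  assert (2 * (Rabs x * Rabs y) <= x ^ 2 + y ^ 2)
    by (pose proof (Rle_0_sqr (Rabs x - Rabs y)); unfold Rsqr in *; nra).
  assert (Rabs x * Rabs y * Rabs e <= Rabs x * Rabs y * (C * u * v)) by (apply Rmult_le_compat_l; nra).
  assert (0 <= C * u * v) by (apply Rmult_le_pos; [apply Rmult_le_pos|]; auto).
  assert (Rabs x * Rabs y * (C * u * v) <= C / 2 * (x ^ 2 + y ^ 2) * u * v).
  { replace (C / 2 * (x ^ 2 + y ^ 2) * u * v) with ((x ^ 2 + y ^ 2) / 2 * (C * u * v)) by field.
    apply Rmult_le_compat_r; lra. }
  replace (C / 2 * (x ^ 2 * u * v + u * (y ^ 2 * v))) with (C / 2 * (x ^ 2 + y ^ 2) * u * v) by field.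
  lra.
Qed.

Lemma qform_abs_le_geom_conv b t C (E : nat -> nat -> R) p :
  0 <= t < 1 -> 0 <= C ->
  (forall j j', (1 <= j <= p)%nat -> (1 <= j' <= p)%nat ->
     Rabs (E j j') <= C * t ^ (p - j) * t ^ (p - j')) ->
  Rabs (qform b E p) <= C / (1 - t) * geom_conv b t p.
Proof.
  intros Ht HC HE. unfold qform.
  eapply Rle_trans; [apply sum1_abs|].
  eapply Rle_trans; [apply sum1_le; intros j Hj; apply sum1_abs|].
  eapply Rle_trans.
  { apply sum1_le. intros j Hj. apply sum1_le. intros j' Hj'.
    apply (Rabs_mult_le_amgm (b j) (b j') (E j j') C (t ^ (p - j)) (t ^ (p - j'))); auto;
      apply pow_le; lra. }
  rewrite (sum1_ext _ (fun j => C / 2 * (b j ^ 2 * t ^ (p - j) * geom_sum t p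
                                         + t ^ (p - j) * geom_conv b t p))).
  2:{ intros j. unfold geom_sum, geom_conv. rewrite <- !sum1_mult_l, <- sum1_plus.
      rewrite <- sum1_mult_l. apply sum1_ext; intros j'. ring. }
  rewrite sum1_mult_l, sum1_plus, !sum1_mult_r.
  fold (geom_conv b t p) (geom_sum t p).
  destruct (geom_sum_bound t p Ht). assert (0 <= geom_conv b t p) by (apply geom_conv_nonneg; lra).
  assert (C * geom_sum t p <= C * (1 / (1 - t))) by (apply Rmult_le_compat_l; auto).
  replace (C / (1 - t) * geom_conv b t p) with (C * (1 / (1 - t)) * geom_conv b t p) by (field; lra).
  nra.
Qed.

Lemma is_lim_qform_edge b t C (E : nat -> nat -> nat -> R) :
  ex_series (fun n => b (S n) ^ 2) -> 0 <= t < 1 -> 0 <= C ->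
  (forall p j j', (1 <= j <= p)%nat -> (1 <= j' <= p)%nat ->
     Rabs (E p j j') <= C * t ^ (p - j) * t ^ (p - j')) ->
  is_lim_seq (fun p => qform b (E p) p) 0.
Proof.
  intros Hb Ht HC HE.
  assert (Hconv := is_lim_seq_scal_l _ (C / (1 - t)) _ (is_lim_geom_conv b t Hb Ht)).
  simpl in Hconv. rewrite Rmult_0_r in Hconv.
  apply (is_lim_seq_le_le (fun p => - (C / (1 - t) * geom_conv b t p)) _
                          (fun p => C / (1 - t) * geom_conv b t p)); [| |exact Hconv].
  - intros p. apply Rabs_le_between, qform_abs_le_geom_conv; auto.
  - assert (Hopp := proj1 (is_lim_seq_opp _ _) Hconv). simpl in Hopp.
    now rewrite Ropp_0 in Hopp.
Qed.

Lemma is_lim_diag_sum b h K : ex_series (fun n => b (S n) ^ 2) ->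
  (forall n, Rabs (h (S n)) <= K) ->
  is_lim_seq (diag_sum b h) (Series (fun n => b (S n) ^ 2 * h (S n))).
Proof.
  intros Hb Hh.
  assert (Hex : ex_series (fun n => b (S n) ^ 2 * h (S n))).
  { apply (@ex_series_le R_AbsRing R_CompleteNormedModule _ (fun n => b (S n) ^ 2 * K)).
    - intros n. change (norm ?x) with (Rabs x). rewrite Rabs_mult.
      rewrite (Rabs_right (b (S n) ^ 2)) by (apply Rle_ge, pow2_ge_0).
      apply Rmult_le_compat_l; [apply pow2_ge_0|auto].
    - now apply ex_series_scal_r. }
  apply is_lim_seq_incr_1.
  apply (is_lim_seq_ext (sum_n (fun n => b (S n) ^ 2 * h (S n)))).
  - intros n. unfold diag_sum. now rewrite sum1_sum_n.
  - now apply Series_correct.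
Qed.

Lemma is_lim_upper_sum b t M (g : nat -> nat -> R) :
  ex_series (fun n => b (S n) ^ 2) -> 0 <= t < 1 -> 0 <= M ->
  (forall j j', (j < j')%nat -> Rabs (g j j') <= M * t ^ (j' - j)) ->
  is_lim_seq (upper_sum b g) (bsum b g).
Proof.
  intros Hb Ht HM Hg.
  set (a n := sum_n_m (fun j => b j * b (n + 2)%nat * g j (n + 2)%nat) 1 (n + 2 - 1)).
  (* AM-GM on each term bounds [|a n|] by [geom_conv] plus a multiple of [b_(n+2)^2]. *)
  assert (Hex : ex_series a).
  { apply (@ex_series_le R_AbsRing R_CompleteNormedModule _
      (fun n => M / 2 * (t * geom_conv b t (S n) + b (S (S n)) ^ 2 * (1 / (1 - t))))).
    - intros n. change (norm ?x) with (Rabs x). unfold a.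
      replace (n + 2 - 1)%nat with (S n) by lia. replace (n + 2)%nat with (S (S n)) by lia.
      change (sum_n_m ?f 1 (S n)) with (sum1 f (S n)).
      eapply Rle_trans; [apply sum1_abs|].
      eapply Rle_trans.
      { apply sum1_le. intros j Hj.
        apply (Rabs_mult_le_amgm (b j) (b (S (S n))) (g j (S (S n))) M t (t ^ (S n - j)) HM);
          try lra; [apply pow_le; lra|].
        replace (M * t * t ^ (S n - j)) with (M * t ^ (S (S n) - j)); [apply Hg; lia|].
        replace (S (S n) - j)%nat with (S (S n - j)) by lia. simpl. ring. }
      rewrite (sum1_ext _ (fun j => M / 2 * (t * (b j ^ 2 * t ^ (S n - j))
                                             + b (S (S n)) ^ 2 * t * t ^ (S n - j))))
        by (intros j; ring).
      rewrite sum1_mult_l, sum1_plus, !sum1_mult_l.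
      fold (geom_conv b t (S n)) (geom_sum t (S n)).
      destruct (geom_sum_bound t (S n) Ht).
      assert (0 <= b (S (S n)) ^ 2) by apply pow2_ge_0.
      assert (b (S (S n)) ^ 2 * t * geom_sum t (S n) <= b (S (S n)) ^ 2 * (1 / (1 - t))).
      { rewrite Rmult_assoc. apply Rmult_le_compat_l; nra. }
      apply Rmult_le_compat_l; lra.
    - apply (@ex_series_scal_l _ R_NormedModule (M / 2)
               (fun n => t * geom_conv b t (S n) + b (S (S n)) ^ 2 * (1 / (1 - t)))).
      apply (@ex_series_plus _ R_NormedModule (fun n => t * geom_conv b t (S n))
                                              (fun n => b (S (S n)) ^ 2 * (1 / (1 - t)))).
      + apply (@ex_series_scal_l _ R_NormedModule t). now apply ex_series_geom_conv.
      + apply ex_series_scal_r. now apply ex_series_incr_1 in Hb. }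
  unfold bsum. apply (is_lim_seq_incr_n _ 2).
  apply (is_lim_seq_ext (sum_n a)); [|now apply Series_correct].
  intros n. unfold upper_sum, a. symmetry. replace (n + 2)%nat with (S (S n)) by lia.
  unfold sum1 at 1. rewrite sum_Sn_m by lia. simpl (1 - 1)%nat. rewrite sum1_O.
  change (plus 0 ?x) with (0 + x). rewrite Rplus_0_l.
  rewrite <- !sum_n_m_S. unfold sum_n. apply sum_n_m_ext. intros m.
  now replace (m + 2)%nat with (S (S m)) by lia.
Qed.

Lemma is_lim_seq_eq_lim (u : nat -> R) (l l' : R) : l = l' -> is_lim_seq u l -> is_lim_seq u l'.
Proof. now intros ->. Qed.

Lemma is_lim_seq_Rmult_l (u : nat -> R) (c l : R) :
  is_lim_seq u l -> is_lim_seq (fun n => c * u n) (c * l).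
Proof. exact (is_lim_seq_scal_l u c l). Qed.

Lemma is_lim_upper_sum_root4 beta rho g :
  ex_series (fun n => beta (S n) ^ 2) -> Rabs rho < 1 ->
  (forall j j', (j < j')%nat -> Rabs (g j j') <= root4_const rho * root4 rho ^ (j' - j)) ->
  is_lim_seq (upper_sum beta g) (bsum beta g).
Proof.
  intros Hb Hr Hg. apply (is_lim_upper_sum _ (root4 rho) (root4_const rho)); auto.
  - now apply root4_range.
  - now apply root4_const_nonneg.
Qed.

Lemma root4_bound_weaken rho j j' : Rabs rho < 1 ->
  root4_const rho * root4 rho ^ (j' + j) <= root4_const rho * root4 rho ^ (j' - j).
Proof.
  intros Hr. apply Rmult_le_compat_l; [now apply root4_const_nonneg|].
  apply pow_le_pow_le_1; [|lia]. destruct (root4_range rho Hr); lra.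
Qed.

Lemma pow2_pow x j : (x ^ 2) ^ j = x ^ j * x ^ j.
Proof. rewrite <- Rpow_mult_distr. f_equal. ring. Qed.

Lemma pow2_range rho : Rabs rho < 1 -> 0 <= rho ^ 2 <= 1.
Proof. intros Hr. split; [apply pow2_ge_0|]. apply Rlt_le, pow2_lt_1, Hr. Qed.

Lemma pow_pow2_range rho n : Rabs rho < 1 -> 0 <= (rho ^ 2) ^ n <= 1.
Proof. intros Hr. split; [apply pow_le, pow2_ge_0|]. apply pow_le_1, pow2_range, Hr. Qed.

Lemma kappa1_split beta rho p :
  kappa1 beta rho p = diag_sum beta (fun j => 1 ^ j) p
                      + 2 * upper_sum beta (fun j j' => rho ^ (j' - j)) p.
Proof.
  rewrite kappa1_qform, qform_sym by apply kms_sym. f_equal.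
  - apply sum1_ext; intros j. unfold kms. now rewrite pow1, absdiff_diag.
  - f_equal. apply upper_sum_ext_lt. intros j j' H. unfold kms. now rewrite absdiff_lt.
Qed.

Lemma is_lim_kappa1 beta rho : ex_series (fun n => beta (S n) ^ 2) -> Rabs rho < 1 ->
  is_lim_seq (fun p => kappa1 beta rho p) (betaf beta 1 + 2 * b1 beta rho).
Proof.
  intros Hb Hr. apply (is_lim_seq_ext _ _ _ (fun p => eq_sym (kappa1_split beta rho p))).
  apply is_lim_seq_plus'.
  - apply (is_lim_diag_sum _ _ 1 Hb). intros n. rewrite pow1, Rabs_R1; lra.
  - apply is_lim_seq_Rmult_l, (is_lim_upper_sum_root4 _ rho); auto.
    intros j j' _. now apply pow_le_root4.
Qed.

Lemma kappa2_split beta rho p : rho ^ 2 <> 1 ->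
  kappa2 beta rho p =
    (cA rho * diag_sum beta (fun j => 1 ^ j) p
     + (- / (1 - rho ^ 2)) * diag_sum beta (fun j => (rho ^ 2) ^ j) p
     + 2 * (upper_sum beta (fun j j' => rho ^ (j' - j) * INR (j' - j)) p
            + cA rho * upper_sum beta (fun j j' => rho ^ (j' - j)) p
            + (- / (1 - rho ^ 2)) * upper_sum beta (fun j j' => rho ^ (j' + j)) p))
    + qform beta (kms2_edge rho p) p.
Proof.
  intros Hr. assert (HD : 1 - rho ^ 2 <> 0) by lra.
  rewrite kappa2_qform, (qform_ext_loc _ _ (fun j j' => kms2_lim rho j j' + kms2_edge rho p j j'))
    by (intros; now apply kms2E).
  rewrite qform_plus, qform_sym.
  2:{ intros j j'. unfold kms2_lim. now rewrite absdiff_sym, (Rmult_comm (rho ^ j)). }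
  f_equal. f_equal.
  - rewrite <- !diag_sum_scal, <- diag_sum_plus. apply sum1_ext; intros j.
    unfold kms2_lim. rewrite absdiff_diag, pow1, pow2_pow, INR_0, pow_O. field. lra.
  - f_equal. rewrite <- !upper_sum_scal, <- !upper_sum_plus. apply upper_sum_ext_lt. intros j j' H.
    unfold kms2_lim. rewrite absdiff_lt by auto. rewrite (Nat.add_comm j' j), pow_add. field. lra.
Qed.

Lemma kms2_edge_bound rho p j j' : Rabs rho < 1 ->
  Rabs (kms2_edge rho p j j')
  <= root4_const rho * root4_const rho * (1 / (1 - rho ^ 2)) * root4 rho ^ (p - j) * root4 rho ^ (p - j').
Proof.
  intros Hr. assert (Hr2 := pow2_range rho Hr). assert (HD := pow2_lt_1 rho Hr).
  unfold kms2_edge.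
  replace (root4_const rho * root4_const rho * (1 / (1 - rho ^ 2)) * root4 rho ^ (p - j) * root4 rho ^ (p - j'))
    with ((root4_const rho * root4 rho ^ (p - j)) * (root4_const rho * root4 rho ^ (p - j'))
          * (1 / (1 - rho ^ 2))) by ring.
  apply Rabs_mult3_le; try now apply pow_le_root4.
  replace (- rho ^ 2 / (1 - rho ^ 2)) with (- (rho ^ 2 * (1 / (1 - rho ^ 2)))) by (field; lra).
  rewrite Rabs_Ropp. apply Rabs_mult_le_contract; auto.
  rewrite Rabs_right; [lra|]. apply Rle_ge, Rlt_le, Rdiv_lt_0_compat; lra.
Qed.

Lemma is_lim_kappa2 beta rho : ex_series (fun n => beta (S n) ^ 2) -> Rabs rho < 1 ->
  is_lim_seq (fun p => kappa2 beta rho p)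
    (betaf beta 1 * ((1 + rho ^ 2) / (1 - rho ^ 2))
     - betaf beta (rho ^ 2) * (1 / (1 - rho ^ 2))
     + 2 * (b1d beta rho + b1 beta rho * ((1 + rho ^ 2) / (1 - rho ^ 2))
            - b2 beta rho * (1 / (1 - rho ^ 2)))).
Proof.
  intros Hb Hr. assert (HD := pow2_lt_1 rho Hr).
  assert (Ht := root4_range rho Hr). assert (HM := root4_const_nonneg rho Hr).
  apply (is_lim_seq_ext _ _ _ (fun p => eq_sym (kappa2_split beta rho p ltac:(lra)))).
  apply (is_lim_seq_eq_lim _
    ((cA rho * betaf beta 1 + (- / (1 - rho ^ 2)) * betaf beta (rho ^ 2)
      + 2 * (b1d beta rho + cA rho * b1 beta rho + (- / (1 - rho ^ 2)) * b2 beta rho)) + 0)).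
  { unfold cA. field. lra. }
  repeat apply is_lim_seq_plus'; try apply is_lim_seq_Rmult_l;
    repeat apply is_lim_seq_plus'; try apply is_lim_seq_Rmult_l.
  - apply (is_lim_diag_sum _ _ 1 Hb). intros n. rewrite pow1, Rabs_R1; lra.
  - apply (is_lim_diag_sum _ _ 1 Hb). intros n.
    destruct (pow_pow2_range rho (S n) Hr). rewrite Rabs_right; lra.
  - apply (is_lim_upper_sum_root4 _ rho); auto. intros j j' _. now apply pow_INR_le_root4.
  - apply (is_lim_upper_sum_root4 _ rho); auto. intros j j' _. now apply pow_le_root4.
  - apply (is_lim_upper_sum_root4 _ rho); auto. intros j j' _.
    eapply Rle_trans; [now apply pow_le_root4|now apply root4_bound_weaken].
  - apply (is_lim_qform_edge _ (root4 rho)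
             (root4_const rho * root4_const rho * (1 / (1 - rho ^ 2)))); auto.
    + apply Rmult_le_pos; [now apply Rmult_le_pos|]. apply Rlt_le, Rdiv_lt_0_compat; lra.
    + intros p j j' _ _. now apply kms2_edge_bound.
Qed.

Lemma kappa3_split beta rho p : rho ^ 2 <> 1 ->
  kappa3 beta rho p =
    (cB rho * diag_sum beta (fun j => 1 ^ j) p
     + (- cC rho) * diag_sum beta (fun j => (rho ^ 2) ^ j) p
     + (- 2 / (1 - rho ^ 2)) * diag_sum beta (fun j => INR j * (rho ^ 2) ^ j) p
     + 2 * (cB rho * upper_sum beta (fun j j' => rho ^ (j' - j)) p
            + (3 / 2 * cA rho) * upper_sum beta (fun j j' => rho ^ (j' - j) * INR (j' - j)) p
            + (1 / 2) * upper_sum beta (fun j j' => rho ^ (j' - j) * INR (j' - j) ^ 2) p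
            + (- cC rho) * upper_sum beta (fun j j' => rho ^ (j' + j)) p
            + (- / (1 - rho ^ 2)) * upper_sum beta (fun j j' => rho ^ (j' + j) * INR (j' + j)) p))
    + qform beta (kms3_edge rho p) p.
Proof.
  intros Hr. assert (HD : 1 - rho ^ 2 <> 0) by lra.
  rewrite kappa3_qform, (qform_ext_loc _ _ (fun j j' => kms3_lim rho j j' + kms3_edge rho p j j'))
    by (intros; now apply kms3E).
  rewrite qform_plus, qform_sym.
  2:{ intros j j'. unfold kms3_lim.
      now rewrite absdiff_sym, (Rmult_comm (rho ^ j)), (Rplus_comm (INR j)). }
  f_equal. f_equal.
  - rewrite <- !diag_sum_scal, <- !diag_sum_plus. apply sum1_ext; intros j.
    unfold kms3_lim. rewrite absdiff_diag, pow1, pow2_pow, INR_0, pow_O. field. lra.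
  - f_equal. rewrite <- !upper_sum_scal, <- !upper_sum_plus. apply upper_sum_ext_lt. intros j j' H.
    unfold kms3_lim. rewrite absdiff_lt by auto.
    rewrite (Nat.add_comm j' j), pow_add, plus_INR. field. lra.
Qed.

Lemma Rabs_sum6_le a b c d e f :
  Rabs (a + b + c + d + e + f) <= Rabs a + Rabs b + Rabs c + Rabs d + Rabs e + Rabs f.
Proof.
  repeat (eapply Rle_trans; [apply Rabs_triang|apply Rplus_le_compat_r]). apply Rle_refl.
Qed.

Lemma kms3_edge_bound rho p j j' : Rabs rho < 1 ->
  Rabs (kms3_edge rho p j j')
  <= 6 * (root4_const rho * root4_const rho
          * (Rabs (cC rho) + 2 / (1 - rho ^ 2) + 1 / (1 - rho ^ 2) ^ 2))
     * root4 rho ^ (p - j) * root4 rho ^ (p - j').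
Proof.
  intros Hr. assert (Hr2 := pow2_range rho Hr).
  assert (HD : 0 < 1 - rho ^ 2) by (assert (H := pow2_lt_1 rho Hr); lra).
  set (D := 1 - rho ^ 2) in *.
  set (G := Rabs (cC rho) + 2 / D + 1 / D ^ 2).
  assert (HD1 : 0 < 1 / D) by (apply Rdiv_lt_0_compat; lra).
  assert (HD2 : 0 < 1 / D ^ 2) by (apply Rdiv_lt_0_compat; [lra|apply pow_lt; lra]).
  assert (HcC : 0 <= Rabs (cC rho)) by apply Rabs_pos.
  set (a := (p - j)%nat). set (b := (p - j')%nat).
  replace (kms3_edge rho p j j') with
    (rho ^ a * rho ^ b * (- (rho ^ 2 * cC rho))
     + rho ^ a * rho ^ b * (- (rho ^ 2 * (2 / D)))
     + (rho ^ a * INR a) * rho ^ b * (- (rho ^ 2 * (1 / D)))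
     + rho ^ a * (rho ^ b * INR b) * (- (rho ^ 2 * (1 / D)))
     + rho ^ a * rho ^ b * (rho ^ 2 * ((rho ^ j) ^ 2 * (1 / D ^ 2)))
     + rho ^ a * rho ^ b * (rho ^ 2 * ((rho ^ j') ^ 2 * (1 / D ^ 2))))
    by (unfold kms3_edge; fold D a b; field; lra).
  eapply Rle_trans; [apply Rabs_sum6_le|].
  set (X := root4_const rho * root4 rho ^ a). set (Y := root4_const rho * root4 rho ^ b).
  assert (Ha0 : Rabs (rho ^ a) <= X) by now apply pow_le_root4.
  assert (Ha1 : Rabs (rho ^ a * INR a) <= X) by now apply pow_INR_le_root4.
  assert (Hb0 : Rabs (rho ^ b) <= Y) by now apply pow_le_root4.
  assert (Hb1 : Rabs (rho ^ b * INR b) <= Y) by now apply pow_INR_le_root4.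
  assert (Hcoef : forall c, Rabs c <= G -> Rabs (- (rho ^ 2 * c)) <= G)
    by (intros c Hc; rewrite Rabs_Ropp; now apply Rabs_mult_le_contract).
  assert (Hsq : forall n, Rabs (rho ^ 2 * ((rho ^ n) ^ 2 * (1 / D ^ 2))) <= G).
  { intros n. apply Rabs_mult_le_contract; auto. apply Rabs_mult_le_contract.
    - rewrite <- pow2_abs. split; [apply pow2_ge_0|].
      apply pow_le_1. split; [apply Rabs_pos|now apply Rabs_pow_le_1].
    - rewrite Rabs_right by lra. unfold G. lra. }
  assert (H1 : Rabs (- (rho ^ 2 * cC rho)) <= G) by (apply Hcoef; unfold G; lra).
  assert (H2 : Rabs (- (rho ^ 2 * (2 / D))) <= G) by (apply Hcoef; rewrite Rabs_right; unfold G; lra).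
  assert (H3 : Rabs (- (rho ^ 2 * (1 / D))) <= G) by (apply Hcoef; rewrite Rabs_right; unfold G; lra).
  assert (T1 := Rabs_mult3_le _ _ _ _ _ _ Ha0 Hb0 H1).
  assert (T2 := Rabs_mult3_le _ _ _ _ _ _ Ha0 Hb0 H2).
  assert (T3 := Rabs_mult3_le _ _ _ _ _ _ Ha1 Hb0 H3).
  assert (T4 := Rabs_mult3_le _ _ _ _ _ _ Ha0 Hb1 H3).
  assert (T5 := Rabs_mult3_le _ _ _ _ _ _ Ha0 Hb0 (Hsq j)).
  assert (T6 := Rabs_mult3_le _ _ _ _ _ _ Ha0 Hb0 (Hsq j')).
  replace (6 * (root4_const rho * root4_const rho * G) * root4 rho ^ a * root4 rho ^ b)
    with (6 * (X * Y * G)) by (unfold X, Y; ring).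
  lra.
Qed.

Lemma is_lim_kappa3 beta rho : ex_series (fun n => beta (S n) ^ 2) -> Rabs rho < 1 ->
  is_lim_seq (fun p => kappa3 beta rho p)
    (1 / (1 - rho ^ 2) ^ 2 *
       ((1 + 4 * rho ^ 2 + rho ^ 4) * (betaf beta 1 + 2 * b1 beta rho)
        - (1 + 3 * rho ^ 2) * (betaf beta (rho ^ 2) + 2 * b2 beta rho))
     + 1 / (1 - rho ^ 2) *
       (3 * b1d beta rho * (1 + rho ^ 2) - 2 * (b2d beta rho + betaf1 beta (rho ^ 2)))
     + b2nd beta rho).
Proof.
  intros Hb Hr. assert (HD := pow2_lt_1 rho Hr).
  assert (Ht := root4_range rho Hr). assert (HM := root4_const_nonneg rho Hr).
  apply (is_lim_seq_ext _ _ _ (fun p => eq_sym (kappa3_split beta rho p ltac:(lra)))).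
  apply (is_lim_seq_eq_lim _
    ((cB rho * betaf beta 1 + (- cC rho) * betaf beta (rho ^ 2)
      + (- 2 / (1 - rho ^ 2)) * betaf1 beta (rho ^ 2)
      + 2 * (cB rho * b1 beta rho + (3 / 2 * cA rho) * b1d beta rho + (1 / 2) * b2nd beta rho
             + (- cC rho) * b2 beta rho + (- / (1 - rho ^ 2)) * b2d beta rho)) + 0)).
  { unfold cA, cB, cC. field. lra. }
  repeat apply is_lim_seq_plus'; try apply is_lim_seq_Rmult_l;
    repeat apply is_lim_seq_plus'; try apply is_lim_seq_Rmult_l.
  - apply (is_lim_diag_sum _ _ 1 Hb). intros n. rewrite pow1, Rabs_R1; lra.
  - apply (is_lim_diag_sum _ _ 1 Hb). intros n.
    destruct (pow_pow2_range rho (S n) Hr). rewrite Rabs_right; lra.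
  - replace (betaf1 beta (rho ^ 2))
      with (Series (fun n => beta (S n) ^ 2 * (INR (S n) * (rho ^ 2) ^ S n)))
      by (unfold betaf1; apply Series_ext; intros n; simpl; ring).
    apply (is_lim_diag_sum _ (fun j => INR j * (rho ^ 2) ^ j) (root4_const rho) Hb). intros n.
    rewrite pow2_pow, <- Rmult_assoc, (Rmult_comm (INR (S n))), Rabs_mult.
    assert (0 <= Rabs (rho ^ S n * INR (S n))) by apply Rabs_pos.
    assert (Rabs (rho ^ S n) <= 1) by now apply Rabs_pow_le_1.
    assert (Rabs (rho ^ S n * INR (S n)) <= root4_const rho).
    { eapply Rle_trans; [now apply pow_INR_le_root4|].
      rewrite <- (Rmult_1_r (root4_const rho)) at 2. apply Rmult_le_compat_l; auto.
      apply pow_le_1; lra. }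
    nra.
  - apply (is_lim_upper_sum_root4 _ rho); auto. intros j j' _. now apply pow_le_root4.
  - apply (is_lim_upper_sum_root4 _ rho); auto. intros j j' _. now apply pow_INR_le_root4.
  - apply (is_lim_upper_sum_root4 _ rho); auto. intros j j' _. now apply pow_INR2_le_root4.
  - apply (is_lim_upper_sum_root4 _ rho); auto. intros j j' _.
    eapply Rle_trans; [now apply pow_le_root4|now apply root4_bound_weaken].
  - apply (is_lim_upper_sum_root4 _ rho); auto. intros j j' _.
    eapply Rle_trans; [now apply pow_INR_le_root4|now apply root4_bound_weaken].
  - apply (is_lim_qform_edge _ (root4 rho)
             (6 * (root4_const rho * root4_const rho
                   * (Rabs (cC rho) + 2 / (1 - rho ^ 2) + 1 / (1 - rho ^ 2) ^ 2)))); auto.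
    + assert (0 < 2 / (1 - rho ^ 2)) by (apply Rdiv_lt_0_compat; lra).
      assert (0 < 1 / (1 - rho ^ 2) ^ 2) by (apply Rdiv_lt_0_compat; [lra|apply pow_lt; lra]).
      assert (0 <= Rabs (cC rho)) by apply Rabs_pos.
      assert (0 <= root4_const rho * root4_const rho) by now apply Rmult_le_pos. nra.
    + intros p j j' _ _. now apply kms3_edge_bound.
Qed.

Theorem mainTheorem8 (beta : nat -> R) (rho : R) :
  ex_series (fun n => beta (S n) ^ 2) ->
  Rabs rho < 1 ->
  is_lim_seq (fun p => kappa1 beta rho p)
    (Finite (betaf beta 1 + 2 * b1 beta rho)) /\
  is_lim_seq (fun p => kappa2 beta rho p)
    (Finite (betaf beta 1 * ((1 + rho ^ 2) / (1 - rho ^ 2))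
             - betaf beta (rho ^ 2) * (1 / (1 - rho ^ 2))
             + 2 * (b1d beta rho + b1 beta rho * ((1 + rho ^ 2) / (1 - rho ^ 2))
                    - b2 beta rho * (1 / (1 - rho ^ 2))))) /\
  is_lim_seq (fun p => kappa3 beta rho p)
    (Finite (1 / (1 - rho ^ 2) ^ 2 *
               ((1 + 4 * rho ^ 2 + rho ^ 4) * (betaf beta 1 + 2 * b1 beta rho)
                - (1 + 3 * rho ^ 2) * (betaf beta (rho ^ 2) + 2 * b2 beta rho))
             + 1 / (1 - rho ^ 2) *
               (3 * b1d beta rho * (1 + rho ^ 2)
                - 2 * (b2d beta rho + betaf1 beta (rho ^ 2)))
             + b2nd beta rho)).
Proof.
  intros Hb Hr. split; [|split].
  - now apply is_lim_kappa1.
  - now apply is_lim_kappa2.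
  - now apply is_lim_kappa3.
Qed.
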